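(* Let $\hat M_1,\dots,\hat M_N$ be real $d\times d$ matrices and $\mathcal L(U)=\sum_{n=1}^N\|{\rm low}(U^T\hat M_nU)\|^2$ for $U\in\mathbb O(d)$. If $U$ is a stationary point of $\mathcal L$ on $\mathbb O(d)$, then $S-S^T=0$, where $S=\sum_{n=1}^N\big[U^T\hat M_n^TU,\ {\rm low}(U^T\hat M_nU)\big]$.
   Context: $\|\cdot\|$ is the Frobenius norm; ${\rm low}(A)$ is the strictly lower-triangular part of $A$ ($[{\rm low}(A)]_{ij}=A_{ij}$ if $i>j$, else $0$); $[A,B]=AB-BA$. $\mathbb O(d)$ is the manifold of orthogonal matrices; $U$ is a stationary point if $\frac{d}{dt}\mathcal L(Ue^{tX})|_{t=0}=0$ for every skew-symmetric $X$. *)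

From HB Require Import structures.
From mathcomp Require Import all_boot all_order all_algebra.
From mathcomp Require Import all_classical all_reals all_analysis.
Set Implicit Arguments. Unset Strict Implicit. Unset Printing Implicit Defensive.
Import Order.TTheory GRing.Theory Num.Theory.
Import numFieldNormedType.Exports.
Local Open Scope ring_scope.

Definition low (R : pzRingType) (d : nat) (A : 'M[R]_d) : 'M[R]_d :=
  \matrix_(i < d, j < d) (if (j < i)%N then A i j else 0).

Definition frob2 (R : pzRingType) (d : nat) (A : 'M[R]_d) : R :=
  \sum_(i < d) \sum_(j < d) A i j ^+ 2.

Definition mx_commutator (R : pzRingType) (d : nat) (A B : 'M[R]_d) : 'M[R]_d :=
  A *m B - B *m A.

Fixpoint mxpow (R : pzRingType) (d : nat) (A : 'M[R]_d) (k : nat) : 'M[R]_d :=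
  match k with 0 => 1%:M | k'.+1 => A *m mxpow A k' end.

Definition expm (R : realType) (d : nat) (A : 'M[R]_d) : 'M[R]_d :=
  \matrix_(i < d, j < d) (limn (series (fun k : nat => mxpow A k i j / (k`!)%:R))).

Definition orthogonal_mx (R : pzRingType) (d : nat) (U : 'M[R]_d) : Prop :=
  U^T *m U = 1%:M.

Definition skew (R : pzRingType) (d : nat) (X : 'M[R]_d) : Prop :=
  X^T = - X.

Definition loss (R : pzRingType) (d N : nat) (M : 'I_N -> 'M[R]_d) (U : 'M[R]_d) : R :=
  \sum_(n < N) frob2 (low (U^T *m M n *m U)).

Definition stationary (R : realType) (d N : nat) (M : 'I_N -> 'M[R]_d) (U : 'M[R]_d) : Prop :=
  forall X : 'M[R]_d, skew X ->
    is_derive (0 : R) (1 : R) (fun t : R => loss M (U *m expm (t *: X))) 0.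

From Pilot Require Import Defs.
From HB Require Import structures.
From mathcomp Require Import all_boot all_order all_algebra.
From mathcomp Require Import all_classical all_reals all_analysis.
From mathcomp Require Import ring.
Import Order.TTheory GRing.Theory Num.Theory.
Import numFieldNormedType.Exports.
Set Implicit Arguments. Unset Strict Implicit. Unset Printing Implicit Defensive.
Local Open Scope ring_scope.

(** With [A_n = U^T M_n U], the derivative of [t |-> L(U e^{tX})] at [0] is
    [2 sum_n <low A_n, low (X^T A_n + A_n X)>], and trace identities move [X]
    out of the Frobenius product: it equals [2 <X, G>] with
    [G = sum_n (A_n (low A_n)^T + A_n^T low A_n)].  Stationarity makes this
    vanish for every skew [X]; testing against [E_ab - E_ba] shows that the
    skew part [G - G^T] vanishes, and [G - G^T] is exactly [S - S^T]. *)

Definition mx_inner (R : pzRingType) (d : nat) (A B : 'M[R]_d) : R :=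
  \sum_(i < d) \sum_(j < d) A i j * B i j.

Section FrobeniusInner.
Variables (R : comPzRingType) (d : nat).
Implicit Types A B C L X Y : 'M[R]_d.

Lemma frob2E A : frob2 A = mx_inner A A.
Proof. by apply: eq_bigr => i _; apply: eq_bigr => j _; rewrite expr2. Qed.

Lemma mx_innerC A B : mx_inner A B = mx_inner B A.
Proof. by apply: eq_bigr => i _; apply: eq_bigr => j _; rewrite mulrC. Qed.

Lemma mx_inner_trace A B : mx_inner A B = \tr (A^T *m B).
Proof.
rewrite /mx_inner /mxtrace exchange_big; apply: eq_bigr => j _.
by rewrite mxE; apply: eq_bigr => i _; rewrite mxE.
Qed.

Lemma mx_inner_trl A B : mx_inner A^T B = mx_inner A B^T.
Proof. by rewrite !mx_inner_trace trmxK -trmx_mul mxtrace_tr mxtrace_mulC. Qed.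

Lemma mx_inner_mulr A B C : mx_inner A (B *m C) = mx_inner (B^T *m A) C.
Proof. by rewrite !mx_inner_trace trmx_mul trmxK mulmxA. Qed.

Lemma mx_inner_mull A B C : mx_inner A (B *m C) = mx_inner (A *m C^T) B.
Proof. by rewrite !mx_inner_trace trmx_mul trmxK mulmxA mxtrace_mulC mulmxA. Qed.

Lemma mx_innerDr A B C : mx_inner A (B + C) = mx_inner A B + mx_inner A C.
Proof. by rewrite !mx_inner_trace mulmxDr mxtraceD. Qed.

Lemma mx_innerBr A B C : mx_inner A (B - C) = mx_inner A B - mx_inner A C.
Proof. by rewrite !mx_inner_trace mulmxBr raddfB. Qed.

Lemma mx_inner_sumr n A (B : 'I_n -> 'M[R]_d) :
  mx_inner A (\sum_(k < n) B k) = \sum_(k < n) mx_inner A (B k).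
Proof.
rewrite mx_inner_trace mulmx_sumr raddf_sum.
by apply: eq_bigr => k _; rewrite mx_inner_trace.
Qed.

Lemma mx_inner_delta (a b : 'I_d) Y : mx_inner (delta_mx a b) Y = Y a b.
Proof.
rewrite /mx_inner (bigD1 a) //= (bigD1 b) //= !mxE !eqxx mul1r.
have -> : \sum_(j < d | j != b) delta_mx a b a j * Y a j = 0.
  by apply: big1 => j /negPf jb; rewrite mxE jb andbF mul0r.
have -> : \sum_(i < d | i != a) \sum_(j < d) delta_mx a b i j * Y i j = 0.
  by apply: big1 => i /negPf ia; apply: big1 => j _; rewrite mxE ia mul0r.
by rewrite !addr0.
Qed.

Lemma mx_inner_skew_delta (a b : 'I_d) Y :
  mx_inner (delta_mx a b - delta_mx b a) Y = (Y - Y^T) a b.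
Proof. by rewrite mx_innerC mx_innerBr !(mx_innerC Y) !mx_inner_delta !mxE. Qed.

Lemma mx_inner_low A B : mx_inner (low A) (low B) = mx_inner (low A) B.
Proof.
apply: eq_bigr => i _; apply: eq_bigr => j _.
by rewrite !mxE; case: (j < i)%N; rewrite ?mul0r.
Qed.

Lemma mx_inner_low_congr A X :
  mx_inner (low A) (low (X^T *m A + A *m X)) =
  mx_inner X (A *m (low A)^T + A^T *m low A).
Proof.
rewrite mx_inner_low !mx_innerDr (mx_inner_mull (low A)) (mx_inner_mulr (low A)).
by rewrite mx_innerC mx_inner_trl trmx_mul trmxK (mx_innerC (A^T *m low A)).
Qed.

Lemma mx_commutator_skew A L :
  mx_commutator A^T L - (mx_commutator A^T L)^T =
  (A *m L^T + A^T *m L) - (A *m L^T + A^T *m L)^T.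
Proof.
rewrite /mx_commutator !raddfB !raddfD /= !trmx_mul !trmxK opprK.
by rewrite addrACA [RHS]addrACA [RHS]addrC (addrC (- (L *m A^T))).
Qed.

End FrobeniusInner.

Lemma is_derive_sum_fun (R : realType) (x : R) n (h : 'I_n -> R -> R) (dh : 'I_n -> R) :
  (forall k, is_derive x 1 (h k) (dh k)) ->
  is_derive x 1 (fun t => \sum_(k < n) h k t) (\sum_(k < n) dh k).
Proof. by move=> H; rewrite -fct_sumE; exact: is_derive_sum. Qed.

Section MatrixDerivative.
Variables (R : realType) (d : nat) (x : R).
Implicit Types (F G : R -> 'M[R]_d) (A : 'M[R]_d).

Definition is_derive_mx F (F' : 'M[R]_d) : Prop :=
  forall i j, is_derive x 1 (fun t => F t i j) (F' i j).

Lemma is_derive_mx_cst A : is_derive_mx (fun=> A) 0.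
Proof. by move=> i j; rewrite mxE; exact: is_derive_cst. Qed.

Lemma is_derive_mx_tr F (F' : 'M[R]_d) :
  is_derive_mx F F' -> is_derive_mx (fun t => (F t)^T) F'^T.
Proof.
move=> dF i j; rewrite mxE.
by under eq_fun do rewrite mxE; exact: dF.
Qed.

Lemma is_derive_mx_low F (F' : 'M[R]_d) :
  is_derive_mx F F' -> is_derive_mx (fun t => low (F t)) (low F').
Proof.
move=> dF i j; rewrite mxE.
under eq_fun do rewrite mxE.
by case: (j < i)%N; [exact: dF | exact: is_derive_cst].
Qed.

Lemma is_derive_mx_mul F G (F' G' : 'M[R]_d) :
  is_derive_mx F F' -> is_derive_mx G G' ->
  is_derive_mx (fun t => F t *m G t) (F' *m G x + F x *m G').
Proof.
move=> dF dG i j; under eq_fun do rewrite mxE.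
apply: is_derive_eq; first by apply: is_derive_sum_fun => k; exact: is_deriveM.
rewrite !mxE addrC -big_split; apply: eq_bigr => k _ /=.
by rewrite /GRing.scale /= (mulrC (G x k j)).
Qed.

Lemma is_derive_frob2 F (F' : 'M[R]_d) : is_derive_mx F F' ->
  is_derive x 1 (fun t => frob2 (F t)) (2 * mx_inner (F x) F').
Proof.
move=> dF; under eq_fun do rewrite frob2E.
apply: is_derive_eq.
  by apply: is_derive_sum_fun => i; apply: is_derive_sum_fun => j; exact: is_deriveM.
rewrite /mx_inner mulr_sumr; apply: eq_bigr => i _.
by rewrite mulr_sumr; apply: eq_bigr => j _; rewrite /GRing.scale /=; ring.
Qed.

End MatrixDerivative.

Section ExpDominatedSeries.
Variable R : realType.
Implicit Types (c : R^nat) (a m : R).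

(* Termwise bounded by [a] times the exponential series of [m]: such a power
   series converges everywhere, and so do its formal derivatives. *)
Definition exp_dominated c a m := forall k, `|c k| <= a * (m ^+ k / k`!%:R).

Lemma exp_dominated_cvg c a m : 0 <= m -> exp_dominated c a m -> cvgn (series c).
Proof.
move=> m0 cle; have a0 : 0 <= a.
  by have := cle 0%N; rewrite expr0 fact0 divr1 mulr1; apply: le_trans.
apply: normed_cvg; apply: (@series_le_cvg R _ (a *: exp_coeff m)).
- by move=> k; exact: normr_ge0.
- by move=> k; rewrite /= mulr_ge0 // divr_ge0 // exprn_ge0.
- exact: cle.
- by apply: is_cvg_seriesZ; exact: is_cvg_series_exp_coeff.
Qed.

Lemma exp_dominated_diffs c a m :
  exp_dominated c a m -> exp_dominated (pseries_diffs c) (a * m) m.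
Proof.
move=> cle k; rewrite /pseries_diffs normrM ger0_norm //.
apply: le_trans (ler_wpM2l _ (cle k.+1)) _ => //.
have kf : k`!%:R != 0 :> R by rewrite pnatr_eq0 -lt0n fact_gt0.
rewrite le_eqVlt factS natrM exprS; apply/orP; left; apply/eqP.
by field; rewrite kf addrC natr1 pnatr_eq0.
Qed.

Lemma exp_dominated_pseries c a m : 0 <= m ->
  exp_dominated c a m -> cvgn (pseries c 1).
Proof.
move=> m0 cle; apply: (exp_dominated_cvg m0) => k.
by rewrite /= expr1n mulr1; exact: cle.
Qed.

Lemma lim_pseries0 c : limn (pseries c 0) = c 0%N.
Proof.
apply: lim_near_cst => //; exists 1%N => // -[//|n] _.
rewrite /pseries /series /= big_nat_recl // expr0 mulr1 big1 ?addr0 // => i _.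
by rewrite expr0n mulr0.
Qed.

Lemma exp_dominated_is_derive0 c a m : 0 <= m -> exp_dominated c a m ->
  is_derive (0 : R) 1 (fun t => limn (pseries c t)) (c 1%N).
Proof.
move=> m0 cle; have cle1 := exp_dominated_diffs cle.
have cle2 := exp_dominated_diffs cle1.
have := pseries_snd_diffs (exp_dominated_pseries m0 cle)
  (exp_dominated_pseries m0 cle1) (exp_dominated_pseries m0 cle2).
move=> /(_ 0); rewrite normr0 normr1 ltr01 lim_pseries0 => /(_ isT).
by rewrite /pseries_diffs mul1r.
Qed.

End ExpDominatedSeries.

Section MatrixExponential.
Variables (R : realType) (d : nat).
Implicit Types X : 'M[R]_d.

Lemma mxpowZ (t : R) X k : mxpow (t *: X) k = t ^+ k *: mxpow X k.
Proof.
elim: k => [|k IHk] /=; first by rewrite scale1r.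
by rewrite IHk -scalemxAl -scalemxAr scalerA exprS.
Qed.

Lemma mxpow_entry_le X k i j : `|mxpow X k i j| <= (\sum_i \sum_j `|X i j|) ^+ k.
Proof.
set m := \sum_i _; have m0 : 0 <= m by apply: sumr_ge0 => *; apply: sumr_ge0.
elim: k i j => [|k IHk] i j /=.
  by rewrite expr0 mxE; case: (i == j); rewrite ?normr1 ?normr0.
rewrite mxE exprS; apply: le_trans (ler_norm_sum _ _ _) _.
apply: (@le_trans _ _ (\sum_l `|X i l| * m ^+ k)).
  by apply: ler_sum => l _; rewrite normrM ler_wpM2l.
rewrite -mulr_suml ler_wpM2r ?exprn_ge0 //.
by rewrite /m [leRHS](bigD1 i) //= lerDl; apply: sumr_ge0 => *; apply: sumr_ge0.
Qed.

Lemma expmZ_entry X (t : R) i j :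
  expm (t *: X) i j = limn (pseries (fun k => mxpow X k i j / k`!%:R) t).
Proof.
rewrite mxE /pseries; congr (limn (series _)); apply/funext => k.
by rewrite mxpowZ mxE /= -mulrA mulrC.
Qed.

Lemma expm0 : expm (0 : 'M[R]_d) = 1%:M.
Proof.
apply/matrixP => i j.
by rewrite -(scale0r (0 : 'M[R]_d)) expmZ_entry lim_pseries0 /= fact0 divr1.
Qed.

Lemma is_derive_mx_expm X : is_derive_mx 0 (fun t => expm (t *: X)) X.
Proof.
move=> i j; under eq_fun do rewrite expmZ_entry.
have m0 : 0 <= \sum_i \sum_j `|X i j| by apply: sumr_ge0 => *; apply: sumr_ge0.
apply: is_derive_eq; first apply: (@exp_dominated_is_derive0 _ _ 1 _ m0).
  move=> k; rewrite mul1r normrM normfV normr_nat ler_wpM2r ?invr_ge0 //.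
  exact: mxpow_entry_le.
by rewrite /= mulmx1 divr1.
Qed.

End MatrixExponential.

Definition loss_grad (R : pzRingType) (d N : nat) (M : 'I_N -> 'M[R]_d)
    (U : 'M[R]_d) : 'M[R]_d :=
  \sum_(n < N) let A := U^T *m M n *m U in A *m (low A)^T + A^T *m low A.

Lemma is_derive_loss_expm (R : realType) (d N : nat) (M : 'I_N -> 'M[R]_d)
    (U X : 'M[R]_d) :
  is_derive (0 : R) 1 (fun t => loss M (U *m expm (t *: X)))
    (2 * mx_inner X (loss_grad M U)).
Proof.
pose A n := U^T *m M n *m U; pose E t := expm (t *: X).
have -> : (fun t => loss M (U *m E t)) =
          (fun t => \sum_(n < N) frob2 (low ((E t)^T *m A n *m E t))).
  by apply/funext => t; apply: eq_bigr => n _; rewrite /A trmx_mul !mulmxA.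
have dE : is_derive_mx 0 E X := is_derive_mx_expm X.
apply: is_derive_eq.
  apply: is_derive_sum_fun => n; apply/is_derive_frob2/is_derive_mx_low.
  have dEtA := is_derive_mx_mul (is_derive_mx_tr dE) (is_derive_mx_cst _ (A n)).
  exact: is_derive_mx_mul dEtA dE.
rewrite mx_inner_sumr mulr_sumr; apply: eq_bigr => n _.
by rewrite /E scale0r expm0 trmx1 !mul1mx !mulmx1 addr0 mx_inner_low_congr.
Qed.

Theorem lemma5 (R : realType) (d N : nat) (M : 'I_N -> 'M[R]_d) (U : 'M[R]_d) :
  orthogonal_mx U -> stationary M U ->
  let S := \sum_(n < N) mx_commutator (U^T *m (M n)^T *m U) (low (U^T *m M n *m U)) in
  S - S^T = 0.
Proof.
move=> _ stU S.
have -> : S - S^T = loss_grad M U - (loss_grad M U)^T.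
  rewrite /S /loss_grad !(raddf_sum (@trmx R d d)) -!sumrB; apply: eq_bigr => n _.
  by rewrite -mx_commutator_skew !trmx_mul trmxK mulmxA.
apply/matrixP => a b; rewrite [RHS]mxE -mx_inner_skew_delta.
pose X : 'M[R]_d := delta_mx a b - delta_mx b a.
have skX : Defs.skew X by rewrite /Defs.skew raddfB /= !trmx_delta opprB.
have := derive_val (is_derive := stU X skX).
rewrite (derive_val (is_derive := is_derive_loss_expm M U X)).
by move/eqP; rewrite mulf_eq0 pnatr_eq0 => /eqP.
Qed.
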